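(* There exist constants $C\ge2$, $K$ and $M$ such that for all integers $k,k'$ with $K\le k<k'\le2k$, setting $c=c(k,k')=e^{-k/2+5k'/6}$, one can transform $\cos(kx)e^{-kt}$ into $c\cos(k'y)e^{-k't}$ within $\mathbb{T}^2\times[0,C]$ via a solution $u$ of $\ddot u+\operatorname{div}(A\nabla u)=0$ with $A$ in the regularity class $R(80,60)$. Moreover, for $t\in[0,C]$, $u=f(t)\cos(kx)+g(t)\cos(k'y)$ with $f,g\in C^2$ satisfying, for $0\le\alpha\le2$, $$|f^{(\alpha)}(t)|\le Mk^{7\alpha/3}e^{-kt},\qquad|g^{(\alpha)}(t)|\le M(k')^\alpha c\,e^{-k't/3};$$ on $[0,\frac1{100}]$, $u=\cos(kx)e^{-kt}$ and $A=\mathrm{Id}$; on $[C-\frac1{100},C]$, $u=c\cos(k'y)e^{-k't}$ and $A=\mathrm{Id}$.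
   Context: $\mathbb{T}^2=(\mathbb{R}/2\pi\mathbb{Z})^2$ with coordinates $(x,y)$; $t$ the third coordinate. $\ddot u+\operatorname{div}(A\nabla u)$ means $\partial_t^2u+\sum_{i,j\in\{x,y\}}\partial_i(A_{ij}\partial_ju)$ for a real $2\times2$ matrix function $A$. ''Transform $u_1$ into $u_2$ within $\mathbb{T}^2\times[T_1,T_2]$ via $u$'' means: $u$ is $C^2$, $A$ is $C^1$, $\ddot u+\operatorname{div}(A\nabla u)=0$ on $\mathbb{T}^2\times\mathbb{R}$, $u=u_1$, $A=\mathrm{Id}$ for $t\le T_1$ and $u=u_2$, $A=\mathrm{Id}$ for $t\ge T_2$. Regularity class $R(\Lambda,C)$: $\Lambda^{-1}|\xi|^2\le\xi^TA\xi\le\Lambda|\xi|^2$ for all $\xi\in\mathbb{R}^2$ at every point, and the entries of $A$ are $C^1$ with all first partial derivatives in $x,y,t$ bounded by $C$ in absolute value. *)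

From Stdlib Require Import Reals.
From Coquelicot Require Import Coquelicot.
Open Scope R_scope.

Definition fun3 := R -> R -> R -> R.

(* 2*pi-periodicity in x and y (i.e. f is a function on T^2 x R). *)
Definition periodic_T2 (f : fun3) : Prop :=
  forall x y t, f (x + 2 * PI) y t = f x y t /\ f x (y + 2 * PI) t = f x y t.

Definition continuous3 (f : fun3) : Prop :=
  forall x y t eps, 0 < eps -> exists delta, 0 < delta /\
    forall x' y' t', Rabs (x' - x) < delta -> Rabs (y' - y) < delta ->
      Rabs (t' - t) < delta -> Rabs (f x' y' t' - f x y t) < eps.

Definition dx (f : fun3) : fun3 := fun x y t => Derive (fun s => f s y t) x.
Definition dy (f : fun3) : fun3 := fun x y t => Derive (fun s => f x s t) y.
Definition dt (f : fun3) : fun3 := fun x y t => Derive (fun s => f x y s) t.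

Definition C1_3 (f : fun3) : Prop :=
  continuous3 f /\
  (forall x y t, ex_derive (fun s => f s y t) x /\
                 ex_derive (fun s => f x s t) y /\
                 ex_derive (fun s => f x y s) t) /\
  continuous3 (dx f) /\ continuous3 (dy f) /\ continuous3 (dt f).

Definition C2_3 (f : fun3) : Prop :=
  C1_3 f /\ C1_3 (dx f) /\ C1_3 (dy f) /\ C1_3 (dt f).

Definition C2_1 (f : R -> R) : Prop :=
  (forall t, ex_derive f t) /\ (forall t, ex_derive (Derive f) t) /\
  continuity (Derive_n f 2).

Record mat_field := MatField {
  axx : fun3; axy : fun3; ayx : fun3; ayy : fun3 }.

Definition is_Id_at (A : mat_field) x y t : Prop :=
  axx A x y t = 1 /\ axy A x y t = 0 /\ ayx A x y t = 0 /\ ayy A x y t = 1.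

Definition pde_holds (A : mat_field) (u : fun3) x y t : Prop :=
  dt (dt u) x y t
  + Derive (fun s => axx A s y t * dx u s y t + axy A s y t * dy u s y t) x
  + Derive (fun s => ayx A x s t * dx u x s t + ayy A x s t * dy u x s t) y
  = 0.

Definition transforms (u1 u2 : fun3) (T1 T2 : R) (u : fun3) (A : mat_field) : Prop :=
  periodic_T2 u /\ periodic_T2 (axx A) /\ periodic_T2 (axy A) /\
  periodic_T2 (ayx A) /\ periodic_T2 (ayy A) /\
  C2_3 u /\
  C1_3 (axx A) /\ C1_3 (axy A) /\ C1_3 (ayx A) /\ C1_3 (ayy A) /\
  (forall x y t, pde_holds A u x y t) /\
  (forall x y t, t <= T1 -> u x y t = u1 x y t /\ is_Id_at A x y t) /\
  (forall x y t, T2 <= t -> u x y t = u2 x y t /\ is_Id_at A x y t).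

Definition reg_class (Lam Cb : R) (A : mat_field) : Prop :=
  (forall x y t xi1 xi2,
     let q := xi1 * (axx A x y t * xi1 + axy A x y t * xi2)
            + xi2 * (ayx A x y t * xi1 + ayy A x y t * xi2) in
     / Lam * (xi1 ^ 2 + xi2 ^ 2) <= q /\ q <= Lam * (xi1 ^ 2 + xi2 ^ 2)) /\
  (forall a, (a = axx A \/ a = axy A \/ a = ayx A \/ a = ayy A) ->
     C1_3 a /\
     forall x y t, Rabs (dx a x y t) <= Cb /\ Rabs (dy a x y t) <= Cb /\
                   Rabs (dt a x y t) <= Cb).

From Stdlib Require Import Reals Lra Psatz FunctionalExtensionality ZArith Lia.
From Coquelicot Require Import Coquelicot.
Open Scope R_scope.

(* The solution is sought as u = f(t) cos(kx) + g(t) cos(k'y).  The coefficient field is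
   diag(1, b(t)) plus corrections of size O(1/k): [cos(kx) cos(k'y)] multiples of the couplings
   rho1, rho2 on the diagonal and [sin(kx) sin(k'y)] multiples off it.  Thanks to
   sin^2 + cos^2 = 1, div(A grad u) stays in the span of cos(kx) and cos(k'y), so the equation
   reduces to the ODE system  f'' = k^2 f - k' rho2 g,  g'' = b k'^2 g - k rho1 f.
   Take f = e^{-kt}, switched off on [0.65, 0.75], and g = eps e^{-k' H(t)} with
   eps = e^{-k/2 + k'/6}, switched on on [0.06, 0.07], where the time change H has slope 1/3
   before 0.8 and slope 1 after 1.2, so that g = c e^{-k't} at the end.  Solving the ODEs for the
   couplings, rho1 and rho2 live on the two switching windows, where the choice of eps gives
   g/f <= 10/k, resp. f/g <= 20/k; hence rho1, rho2 = O(1), their derivatives are O(k), and A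
   stays in R(80, 60) uniformly in k. *)

(** * Gluing functions at a point *)

Definition glue (a : R) (p q : R -> R) (t : R) : R := if Rle_dec t a then p t else q t.

Lemma glue_le a p q t : t <= a -> glue a p q t = p t.
Proof. intros; unfold glue; destruct (Rle_dec t a); lra. Qed.

Lemma glue_gt a p q t : a < t -> glue a p q t = q t.
Proof. intros; unfold glue; destruct (Rle_dec t a); lra. Qed.

Lemma is_derive_glue a p q p' q' :
  (forall t, is_derive p t (p' t)) -> (forall t, is_derive q t (q' t)) ->
  p a = q a -> p' a = q' a ->
  forall t, is_derive (glue a p q) t (glue a p' q' t).
Proof.
  intros Hp Hq E E' t.
  destruct (Rtotal_order t a) as [Hlt|[<-|Hgt]].
  - rewrite glue_le by lra.
    apply is_derive_ext_loc with p; [|apply Hp].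
    apply filter_imp with (fun s => s < a); [|apply (open_lt a); auto].
    intros; rewrite glue_le; lra.
  - rewrite glue_le by lra.
    apply is_derive_Reals. intros eps Heps.
    destruct (proj1 (is_derive_Reals _ _ _) (Hp t) eps Heps) as [d1 Hd1].
    destruct (proj1 (is_derive_Reals _ _ _) (Hq t) eps Heps) as [d2 Hd2].
    assert (Hd : 0 < Rmin d1 d2) by (apply Rmin_pos; apply cond_pos).
    exists (mkposreal _ Hd); simpl. intros h Hh0 Hh.
    pose proof (Rmin_l d1 d2); pose proof (Rmin_r d1 d2).
    rewrite (glue_le t p q t) by lra.
    destruct (Rle_dec (t + h) t).
    + rewrite glue_le by lra. apply Hd1; auto; lra.
    + rewrite glue_gt by lra. rewrite E, E'. apply Hd2; auto; lra.
  - rewrite glue_gt by lra.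
    apply is_derive_ext_loc with q; [|apply Hq].
    apply filter_imp with (fun s => a < s); [|apply (open_gt a); auto].
    intros; rewrite glue_gt; lra.
Qed.

Lemma continuity_glue a p q :
  continuity p -> continuity q -> p a = q a -> continuity (glue a p q).
Proof.
  intros Hp Hq E t eps Heps.
  destruct (Hp t eps Heps) as [d1 [Hd1 H1]]; destruct (Hq t eps Heps) as [d2 [Hd2 H2]].
  destruct (Hp a eps Heps) as [d3 [Hd3 H3]]; destruct (Hq a eps Heps) as [d4 [Hd4 H4]].
  simpl in *; unfold R_dist, D_x, no_cond in *.
  destruct (Rtotal_order t a) as [Hlt|[<-|Hgt]].
  - exists (Rmin d1 (a - t)); split; [apply Rmin_pos; lra|].
    intros s [Hs0 Hs]. pose proof (Rmin_l d1 (a - t)); pose proof (Rmin_r d1 (a - t)).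
    assert (s < a) by (apply Rabs_lt_between' in Hs; lra).
    rewrite !glue_le by lra. apply H1; split; [exact Hs0|lra].
  - exists (Rmin d3 d4); split; [apply Rmin_pos; lra|].
    intros s [Hs0 Hs]. pose proof (Rmin_l d3 d4); pose proof (Rmin_r d3 d4).
    rewrite (glue_le t p q t) by lra.
    destruct (Rle_dec s t).
    + rewrite glue_le by lra. apply H3; split; [exact Hs0|lra].
    + rewrite glue_gt, E by lra. apply H4; split; [exact Hs0|lra].
  - exists (Rmin d2 (t - a)); split; [apply Rmin_pos; lra|].
    intros s [Hs0 Hs]. pose proof (Rmin_l d2 (t - a)); pose proof (Rmin_r d2 (t - a)).
    assert (a < s) by (apply Rabs_lt_between' in Hs; lra).
    rewrite !glue_gt by lra. apply H2; split; [exact Hs0|lra].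
Qed.

Definition glue3 a b (p q r : R -> R) := glue a p (glue b q r).

Lemma is_derive_glue3 a b p q r p' q' r' :
  a < b ->
  (forall t, is_derive p t (p' t)) -> (forall t, is_derive q t (q' t)) ->
  (forall t, is_derive r t (r' t)) ->
  p a = q a -> p' a = q' a -> q b = r b -> q' b = r' b ->
  forall t, is_derive (glue3 a b p q r) t (glue3 a b p' q' r' t).
Proof.
  intros Hab Hp Hq Hr E1 E1' E2 E2'; unfold glue3.
  apply is_derive_glue; auto.
  - apply is_derive_glue; auto.
  - rewrite glue_le; lra.
  - rewrite glue_le; lra.
Qed.

Lemma continuity_glue3 a b p q r : a < b ->
  continuity p -> continuity q -> continuity r -> p a = q a -> q b = r b ->
  continuity (glue3 a b p q r).
Proof.
  intros; unfold glue3. apply continuity_glue; auto.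
  - apply continuity_glue; auto.
  - rewrite glue_le; lra.
Qed.

Lemma glue3_ind a b p q r t (P : R -> Prop) : a < b ->
  (t <= a -> P (p t)) -> (a <= t <= b -> P (q t)) -> (b <= t -> P (r t)) ->
  P (glue3 a b p q r t).
Proof.
  intros; unfold glue3, glue.
  destruct (Rle_dec t a); auto.
  destruct (Rle_dec t b); [apply H1|apply H2]; lra.
Qed.

Lemma glue3_left a b p q r t : a < b -> t <= a -> glue3 a b p q r t = p t.
Proof. intros; unfold glue3; rewrite glue_le; lra. Qed.

Lemma glue3_right a b p q r t : a < b -> b <= t -> q b = r b -> glue3 a b p q r t = r t.
Proof.
  intros; unfold glue3, glue.
  destruct (Rle_dec t a); [lra|].
  destruct (Rle_dec t b); [replace t with b by lra|]; auto.
Qed.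

(** * A [C^3] step function *)

(* The degree-7 smoothstep: its derivatives of order 1 to 3 vanish at 0 and 1,
   so gluing it to the constants 0 and 1 gives a [C^3] function. *)
Definition step_poly u := u^4 * (35 - 84*u + 70*u^2 - 20*u^3).
Definition step_poly1 u := 140 * u^3 * (1 - u)^3.
Definition step_poly2 u := 420 * u^2 * (1 - u)^2 * (1 - 2*u).
Definition step_poly3 u := 840 * u * (1 - u) * (1 - 5*u + 5*u^2).
Definition ramp_poly u := u^5 * (7 - 14*u + 10*u^2 - 5/2 * u^3).

Definition step := glue3 0 1 (fun _ => 0) step_poly (fun _ => 1).
Definition step1 := glue3 0 1 (fun _ => 0) step_poly1 (fun _ => 0).
Definition step2 := glue3 0 1 (fun _ => 0) step_poly2 (fun _ => 0).
Definition step3 := glue3 0 1 (fun _ => 0) step_poly3 (fun _ => 0).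
Definition ramp := glue3 0 1 (fun _ => 0) ramp_poly (fun u => u - 1/2).

Lemma is_derive_const_fun (c t : R) : is_derive (fun _ => c) t 0.
Proof. auto_derive; auto. Qed.

(* Coquelicot states derivative equations at type [R_AbsRing]; [ring] and [field] need [R]. *)
Ltac R_eq := match goal with |- @eq _ ?x ?y => change (@eq R x y) end.

Ltac glue3_derive p p' :=
  apply is_derive_glue3; try lra; try (intro; apply is_derive_const_fun);
  try (intro; unfold p, p'; auto_derive; auto; R_eq; field);
  unfold p, p'; simpl; field.

Lemma is_derive_step t : is_derive step t (step1 t).
Proof. glue3_derive step_poly step_poly1. Qed.

Lemma is_derive_step1 t : is_derive step1 t (step2 t).
Proof. glue3_derive step_poly1 step_poly2. Qed.

Lemma is_derive_step2 t : is_derive step2 t (step3 t).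
Proof. glue3_derive step_poly2 step_poly3. Qed.

Lemma is_derive_ramp t : is_derive ramp t (step t).
Proof. glue3_derive ramp_poly step_poly. Qed.

Lemma continuity_ex_derive (f : R -> R) : (forall t, ex_derive f t) -> continuity f.
Proof. intros H t; apply derivable_continuous_pt, ex_derive_Reals_0, H. Qed.

Lemma continuity_step3 : continuity step3.
Proof.
  apply continuity_glue3; try lra; try (unfold step_poly3; simpl; ring);
    apply continuity_ex_derive; intro; unfold step_poly3; auto_derive; auto.
Qed.

Lemma unit_interval_prod t : 0 <= t <= 1 -> 0 <= t * (1 - t) <= 1/4.
Proof. intros; pose proof (pow2_ge_0 (t - 1/2)); split; nra. Qed.

Lemma step_bounds t : 0 <= step t <= 1.
Proof.
  unfold step; apply glue3_ind; try lra; intros Ht.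
  assert (0 <= t^4) by (apply pow_le; lra).
  assert (0 <= (1 - t)^4) by (apply pow_le; lra).
  assert (1 - step_poly t = (1 - t)^4 * (1 + 4*t + 10*t^2 + 20*t^3)) by (unfold step_poly; ring).
  assert (0 <= (1 - t)^4 * (1 + 4*t + 10*t^2 + 20*t^3)) by (apply Rmult_le_pos; nra).
  assert (35 - 84*t + 70*t^2 - 20*t^3 >= 1) by nra.
  unfold step_poly; split; nra.
Qed.

Lemma step1_bounds t : 0 <= step1 t <= 35/16.
Proof.
  unfold step1; apply glue3_ind; try lra; intros Ht.
  unfold step_poly1; replace (140 * t^3 * (1 - t)^3) with (140 * (t * (1 - t))^3) by ring.
  pose proof (unit_interval_prod t Ht).
  assert (0 <= (t * (1 - t))^3) by (apply pow_le; lra).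
  assert ((t * (1 - t))^3 <= (1/4)^3) by (apply pow_incr; lra).
  lra.
Qed.

Lemma Rabs_step2_le t : Rabs (step2 t) <= 27.
Proof.
  unfold step2; apply glue3_ind; try lra; intros Ht; try (rewrite Rabs_R0; lra).
  unfold step_poly2.
  replace (420 * t^2 * (1 - t)^2 * (1 - 2*t)) with (420 * (t * (1 - t))^2 * (1 - 2*t)) by ring.
  pose proof (unit_interval_prod t Ht).
  assert (0 <= (t * (1 - t))^2 <= 1/16) by nra.
  apply Rabs_le_between; split; nra.
Qed.

Lemma Rabs_step3_le t : Rabs (step3 t) <= 210.
Proof.
  unfold step3; apply glue3_ind; try lra; intros Ht; try (rewrite Rabs_R0; lra).
  unfold step_poly3.
  replace (840 * t * (1 - t) * (1 - 5*t + 5*t^2))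
    with (840 * (t * (1 - t)) * (1 - 5 * (t * (1 - t)))) by ring.
  pose proof (unit_interval_prod t Ht).
  apply Rabs_le_between; split; nra.
Qed.

Lemma ramp_nonneg t : 0 <= ramp t.
Proof.
  unfold ramp; apply glue3_ind; try lra; intros Ht.
  assert (0 <= t^5) by (apply pow_le; lra).
  assert (0 <= (1 - t) * (13/2 - 15/2*t + 5/2*t^2)) by (apply Rmult_le_pos; nra).
  unfold ramp_poly; nra.
Qed.

Lemma step_le0 t : t <= 0 -> step t = 0.
Proof. intros; unfold step; rewrite glue3_left; lra. Qed.

Lemma step_ge1 t : 1 <= t -> step t = 1.
Proof. intros; unfold step; rewrite glue3_right; try lra; unfold step_poly; ring. Qed.

Lemma ramp_le0 t : t <= 0 -> ramp t = 0.
Proof. intros; unfold ramp; rewrite glue3_left; lra. Qed.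

Lemma ramp_ge1 t : 1 <= t -> ramp t = t - 1/2.
Proof. intros; unfold ramp; rewrite glue3_right; try lra; unfold ramp_poly; field. Qed.

Lemma step_derivs_out t : t <= 0 \/ 1 <= t -> step1 t = 0 /\ step2 t = 0 /\ step3 t = 0.
Proof.
  intros [Ht|Ht]; unfold step1, step2, step3;
    [rewrite !glue3_left | rewrite !glue3_right]; auto; try lra;
    unfold step_poly1, step_poly2, step_poly3; ring.
Qed.

(** * Cutoffs rising on [[a, a + w]] *)

Definition cutoff a w t := step ((t - a) / w).
Definition cutoff1 a w t := step1 ((t - a) / w) / w.
Definition cutoff2 a w t := step2 ((t - a) / w) / w^2.
Definition cutoff3 a w t := step3 ((t - a) / w) / w^3.
Definition ramp_at a w t := w * ramp ((t - a) / w).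

Section Cutoff.
Variables a w : R.
Hypothesis w_pos : 0 < w.

Lemma is_derive_rescale (p p' : R -> R) t :
  (forall u, is_derive p u (p' u)) -> is_derive (fun s => p ((s - a) / w)) t (p' ((t - a) / w) / w).
Proof.
  intros Hp; rewrite <- (is_derive_unique _ _ _ (Hp ((t - a) / w))).
  change (Derive p ((t - a) / w)) with (Derive (fun z => p z) ((t - a) / w)).
  auto_derive; [eexists; apply Hp|]. unfold Rminus, Rdiv; simpl; ring.
Qed.

Lemma is_derive_cutoff t : is_derive (cutoff a w) t (cutoff1 a w t).
Proof. apply (is_derive_rescale step step1), is_derive_step. Qed.

Lemma is_derive_cutoff1 t : is_derive (cutoff1 a w) t (cutoff2 a w t).
Proof.
  unfold cutoff1, cutoff2.
  apply (is_derive_ext (fun s => / w * step1 ((s - a) / w))); [intro; R_eq; unfold Rdiv; ring|].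
  replace (step2 ((t - a) / w) / w^2) with (/ w * (step2 ((t - a) / w) / w)) by (field; lra).
  apply is_derive_scal, (is_derive_rescale step1 step2), is_derive_step1.
Qed.

Lemma is_derive_cutoff2 t : is_derive (cutoff2 a w) t (cutoff3 a w t).
Proof.
  unfold cutoff2, cutoff3.
  apply (is_derive_ext (fun s => / w^2 * step2 ((s - a) / w))); [intro; R_eq; unfold Rdiv; ring|].
  replace (step3 ((t - a) / w) / w^3) with (/ w^2 * (step3 ((t - a) / w) / w)) by (field; lra).
  apply is_derive_scal, (is_derive_rescale step2 step3), is_derive_step2.
Qed.

Lemma is_derive_ramp_at t : is_derive (ramp_at a w) t (cutoff a w t).
Proof.
  unfold ramp_at, cutoff.
  replace (step ((t - a) / w)) with (w * (step ((t - a) / w) / w)) by (field; lra).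
  apply is_derive_scal, (is_derive_rescale ramp step), is_derive_ramp.
Qed.

Lemma Derive_cutoff t : Derive (fun s => cutoff a w s) t = cutoff1 a w t.
Proof. apply is_derive_unique, is_derive_cutoff. Qed.

Lemma Derive_cutoff1 t : Derive (fun s => cutoff1 a w s) t = cutoff2 a w t.
Proof. apply is_derive_unique, is_derive_cutoff1. Qed.

Lemma Derive_cutoff2 t : Derive (fun s => cutoff2 a w s) t = cutoff3 a w t.
Proof. apply is_derive_unique, is_derive_cutoff2. Qed.

Lemma Derive_ramp_at t : Derive (fun s => ramp_at a w s) t = cutoff a w t.
Proof. apply is_derive_unique, is_derive_ramp_at. Qed.

Lemma continuity_cutoff3 : continuity (cutoff3 a w).
Proof.
  intro t; unfold cutoff3; apply continuity_pt_div.
  - apply (continuity_pt_comp (fun s => (s - a) / w) step3); [|apply continuity_step3].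
    apply continuity_ex_derive; intro; auto_derive; lra.
  - apply continuity_pt_const; intros ? ?; auto.
  - apply pow_nonzero; lra.
Qed.

Lemma rescale_le0 t : t <= a -> (t - a) / w <= 0.
Proof. intros; apply Rmult_le_0_r; [lra|]. apply Rlt_le, Rinv_0_lt_compat; lra. Qed.

Lemma rescale_ge1 t : a + w <= t -> 1 <= (t - a) / w.
Proof.
  intros; apply Rmult_le_reg_r with w; auto.
  unfold Rdiv; rewrite Rmult_assoc, Rinv_l; lra.
Qed.

Lemma cutoff_le t : t <= a -> cutoff a w t = 0.
Proof. intros; apply step_le0, rescale_le0; auto. Qed.

Lemma cutoff_ge t : a + w <= t -> cutoff a w t = 1.
Proof. intros; apply step_ge1, rescale_ge1; auto. Qed.

Lemma cutoff_derivs_out t : t <= a \/ a + w <= t ->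
  cutoff1 a w t = 0 /\ cutoff2 a w t = 0 /\ cutoff3 a w t = 0.
Proof.
  intros Ht; unfold cutoff1, cutoff2, cutoff3.
  destruct (step_derivs_out ((t - a) / w)) as [-> [-> ->]];
    [destruct Ht; [left; apply rescale_le0 | right; apply rescale_ge1]; auto|].
  unfold Rdiv; repeat split; ring.
Qed.

Lemma cutoff1_out t : t <= a \/ a + w <= t -> cutoff1 a w t = 0.
Proof. apply cutoff_derivs_out. Qed.

Lemma cutoff2_out t : t <= a \/ a + w <= t -> cutoff2 a w t = 0.
Proof. apply cutoff_derivs_out. Qed.

Lemma cutoff3_out t : t <= a \/ a + w <= t -> cutoff3 a w t = 0.
Proof. apply cutoff_derivs_out. Qed.

Lemma ramp_at_le t : t <= a -> ramp_at a w t = 0.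
Proof. intros; unfold ramp_at; rewrite ramp_le0 by (apply rescale_le0; auto); ring. Qed.

Lemma ramp_at_ge t : a + w <= t -> ramp_at a w t = t - a - w / 2.
Proof. intros; unfold ramp_at; rewrite ramp_ge1 by (apply rescale_ge1; auto); field; lra. Qed.

Lemma ramp_at_nonneg t : 0 <= ramp_at a w t.
Proof. unfold ramp_at; apply Rmult_le_pos; [lra|apply ramp_nonneg]. Qed.

Lemma cutoff_bounds t : 0 <= cutoff a w t <= 1.
Proof. apply step_bounds. Qed.

Lemma cutoff1_bounds t : 0 <= cutoff1 a w t <= (35/16) / w.
Proof.
  unfold cutoff1; pose proof (step1_bounds ((t - a) / w)).
  assert (0 < / w) by (apply Rinv_0_lt_compat; lra).
  unfold Rdiv at 1 3; split; [apply Rmult_le_pos|apply Rmult_le_compat_r]; lra.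
Qed.

Lemma Rabs_cutoff1_le t : Rabs (cutoff1 a w t) <= (35/16) / w.
Proof. pose proof (cutoff1_bounds t); rewrite Rabs_right; lra. Qed.

Lemma Rabs_div_pow_le u c n : Rabs u <= c -> Rabs (u / w^n) <= c / w^n.
Proof.
  intros; assert (0 < / w^n) by (apply Rinv_0_lt_compat, pow_lt; lra).
  unfold Rdiv; rewrite Rabs_mult, (Rabs_right (/ w^n)) by lra.
  apply Rmult_le_compat_r; lra.
Qed.

Lemma Rabs_cutoff2_le t : Rabs (cutoff2 a w t) <= 27 / w^2.
Proof. apply Rabs_div_pow_le, Rabs_step2_le. Qed.

Lemma Rabs_cutoff3_le t : Rabs (cutoff3 a w t) <= 210 / w^3.
Proof. apply Rabs_div_pow_le, Rabs_step3_le. Qed.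

End Cutoff.

(** * Separated functions on [T^2 x R] *)

Lemma continuity_pt_eps (p : R -> R) x eps : continuity p -> 0 < eps ->
  exists d, 0 < d /\ forall x', Rabs (x' - x) < d -> Rabs (p x' - p x) < eps.
Proof.
  intros Hp He; destruct (Hp x eps He) as [d [Hd H]]; exists d; split; auto.
  intros x' Hx'; destruct (Req_dec x' x) as [->|Hne].
  - rewrite Rminus_diag, Rabs_R0; lra.
  - apply (H x'); split; [split; [exact I|auto]|exact Hx'].
Qed.

Lemma continuous3_x (p : R -> R) : continuity p -> continuous3 (fun x _ _ => p x).
Proof.
  intros Hp x y t eps He; destruct (continuity_pt_eps p x eps Hp He) as [d [Hd H]].
  exists d; split; auto.
Qed.

Lemma continuous3_y (p : R -> R) : continuity p -> continuous3 (fun _ y _ => p y).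
Proof.
  intros Hp x y t eps He; destruct (continuity_pt_eps p y eps Hp He) as [d [Hd H]].
  exists d; split; auto.
Qed.

Lemma continuous3_t (p : R -> R) : continuity p -> continuous3 (fun _ _ t => p t).
Proof.
  intros Hp x y t eps He; destruct (continuity_pt_eps p t eps Hp He) as [d [Hd H]].
  exists d; split; auto.
Qed.

Lemma continuous3_plus F G : continuous3 F -> continuous3 G ->
  continuous3 (fun x y t => F x y t + G x y t).
Proof.
  intros HF HG x y t eps He.
  destruct (HF x y t (eps / 2)) as [d1 [Hd1 H1]]; [lra|].
  destruct (HG x y t (eps / 2)) as [d2 [Hd2 H2]]; [lra|].
  exists (Rmin d1 d2); split; [apply Rmin_pos; auto|].
  intros x' y' t' Hx Hy Ht; pose proof (Rmin_l d1 d2); pose proof (Rmin_r d1 d2).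
  specialize (H1 x' y' t' ltac:(lra) ltac:(lra) ltac:(lra)).
  specialize (H2 x' y' t' ltac:(lra) ltac:(lra) ltac:(lra)).
  replace (F x' y' t' + G x' y' t' - (F x y t + G x y t))
    with ((F x' y' t' - F x y t) + (G x' y' t' - G x y t)) by ring.
  eapply Rle_lt_trans; [apply Rabs_triang|lra].
Qed.

Lemma continuous3_mult F G : continuous3 F -> continuous3 G ->
  continuous3 (fun x y t => F x y t * G x y t).
Proof.
  intros HF HG x y t eps He.
  set (F0 := F x y t); set (G0 := G x y t).
  set (M := Rabs F0 + Rabs G0 + 1).
  assert (HM : 1 <= M) by (pose proof (Rabs_pos F0); pose proof (Rabs_pos G0); unfold M; lra).
  set (e := Rmin 1 (eps / (2 * M))).
  assert (He0 : 0 < e) by (apply Rmin_pos; [lra|apply Rdiv_lt_0_compat; lra]).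
  assert (He1 : e <= 1) by apply Rmin_l.
  assert (HeM : e * M <= eps / 2).
  { assert (e <= eps / (2 * M)) by apply Rmin_r.
    replace (eps / 2) with (eps / (2 * M) * M) by (field; lra).
    apply Rmult_le_compat_r; lra. }
  destruct (HF x y t e He0) as [d1 [Hd1 H1]]; destruct (HG x y t e He0) as [d2 [Hd2 H2]].
  exists (Rmin d1 d2); split; [apply Rmin_pos; auto|].
  intros x' y' t' Hx Hy Ht; pose proof (Rmin_l d1 d2); pose proof (Rmin_r d1 d2).
  specialize (H1 x' y' t' ltac:(lra) ltac:(lra) ltac:(lra)); fold F0 in H1.
  specialize (H2 x' y' t' ltac:(lra) ltac:(lra) ltac:(lra)); fold G0 in H2.
  set (dF := F x' y' t' - F0) in *; set (dG := G x' y' t' - G0) in *.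
  replace (F x' y' t' * G x' y' t' - F0 * G0) with (dF * dG + dF * G0 + F0 * dG)
    by (unfold dF, dG; ring).
  assert (Rabs (dF * dG + dF * G0 + F0 * dG) <= e * e + e * Rabs G0 + Rabs F0 * e).
  { eapply Rle_trans; [apply Rabs_triang|]; apply Rplus_le_compat;
      [eapply Rle_trans; [apply Rabs_triang|]; apply Rplus_le_compat|];
      rewrite Rabs_mult; apply Rmult_le_compat; try apply Rabs_pos; lra. }
  assert (e * e <= e) by nra.
  assert (e + e * Rabs G0 + Rabs F0 * e = e * M) by (unfold M; ring).
  lra.
Qed.

Definition tensor (p q r : R -> R) : fun3 := fun x y t => p x * q y * r t.
Definition add3 (F G : fun3) : fun3 := fun x y t => F x y t + G x y t.

Definition C1_deriv (p p' : R -> R) := (forall t, is_derive p t (p' t)) /\ continuity p'.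

Lemma C1_deriv_continuity p p' : C1_deriv p p' -> continuity p.
Proof. intros [H _]; apply continuity_ex_derive; intro t; eexists; apply H. Qed.

Lemma continuous3_tensor p q r :
  continuity p -> continuity q -> continuity r -> continuous3 (tensor p q r).
Proof.
  intros; unfold tensor.
  apply continuous3_mult; [apply continuous3_mult|];
    [apply continuous3_x|apply continuous3_y|apply continuous3_t]; auto.
Qed.

Ltac funext3 := let x := fresh "x" in let y := fresh "y" in let t := fresh "t" in
  apply functional_extensionality; intro x; apply functional_extensionality; intro y;
  apply functional_extensionality; intro t.

Lemma partials_tensor p p' q q' r r' :
  C1_deriv p p' -> C1_deriv q q' -> C1_deriv r r' ->
  dx (tensor p q r) = tensor p' q r /\ dy (tensor p q r) = tensor p q' r /\
  dt (tensor p q r) = tensor p q r'.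
Proof.
  intros [Hp _] [Hq _] [Hr _]; unfold dx, dy, dt, tensor;
    repeat split; funext3; apply is_derive_unique.
  - apply (is_derive_ext (fun s => q y * r t * p s)); [intro; R_eq; ring|].
    replace (p' x * q y * r t) with (q y * r t * p' x) by ring; apply is_derive_scal, Hp.
  - apply (is_derive_ext (fun s => p x * r t * q s)); [intro; R_eq; ring|].
    replace (p x * q' y * r t) with (p x * r t * q' y) by ring; apply is_derive_scal, Hq.
  - apply is_derive_scal, Hr.
Qed.

Lemma C1_3_tensor p p' q q' r r' :
  C1_deriv p p' -> C1_deriv q q' -> C1_deriv r r' -> C1_3 (tensor p q r).
Proof.
  intros Hp Hq Hr.
  pose proof (C1_deriv_continuity _ _ Hp); pose proof (C1_deriv_continuity _ _ Hq);
    pose proof (C1_deriv_continuity _ _ Hr).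
  unfold C1_3; destruct (partials_tensor p p' q q' r r') as [-> [-> ->]]; auto.
  destruct Hp as [Hp Hp'], Hq as [Hq Hq'], Hr as [Hr Hr'].
  split; [apply continuous3_tensor; auto|].
  split; [|repeat split; apply continuous3_tensor; auto].
  intros x y t; unfold tensor; repeat split.
  - apply ex_derive_mult; [apply ex_derive_mult; [eexists; apply Hp|]|]; apply ex_derive_const.
  - apply ex_derive_mult; [apply ex_derive_mult; [|eexists; apply Hq]|]; apply ex_derive_const.
  - apply ex_derive_mult; [apply ex_derive_const|eexists; apply Hr].
Qed.

Lemma partials_add3 F G : C1_3 F -> C1_3 G ->
  dx (add3 F G) = add3 (dx F) (dx G) /\ dy (add3 F G) = add3 (dy F) (dy G) /\
  dt (add3 F G) = add3 (dt F) (dt G).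
Proof.
  intros [_ [HF _]] [_ [HG _]]; unfold dx, dy, dt, add3; repeat split; funext3;
    destruct (HF x y t) as [? [? ?]], (HG x y t) as [? [? ?]]; apply Derive_plus; auto.
Qed.

Lemma C1_3_add3 F G : C1_3 F -> C1_3 G -> C1_3 (add3 F G).
Proof.
  intros HF HG; pose proof (partials_add3 F G HF HG) as [Ex [Ey Et]].
  destruct HF as [HF [HdF [HF1 [HF2 HF3]]]], HG as [HG [HdG [HG1 [HG2 HG3]]]].
  split; [apply continuous3_plus; auto|].
  split; [|rewrite Ex, Ey, Et; repeat split; apply continuous3_plus; auto].
  intros x y t; destruct (HdF x y t) as [? [? ?]], (HdG x y t) as [? [? ?]].
  unfold add3; repeat split; apply (ex_derive_plus (V := R_NormedModule)); auto.
Qed.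

(** * The profiles *)

(* The functions are matched syntactically: unifying, say, [cutoff] with [cutoff1] would
   unfold them down to the real-number primitives. *)
Ltac ex_derive_cutoffs :=
  repeat match goal with
  | |- _ /\ _ => split
  | |- True => exact I
  | |- ex_derive (fun s => cutoff ?a ?w s) _ => eexists; apply (is_derive_cutoff a w); lra
  | |- ex_derive (fun s => cutoff1 ?a ?w s) _ => eexists; apply (is_derive_cutoff1 a w); lra
  | |- ex_derive (fun s => cutoff2 ?a ?w s) _ => eexists; apply (is_derive_cutoff2 a w); lra
  end.

Ltac Derive_cutoffs :=
  repeat match goal with
  | |- context [Derive (fun s => cutoff ?a ?w s) _] => rewrite (Derive_cutoff a w) by lra
  | |- context [Derive (fun s => cutoff1 ?a ?w s) _] => rewrite (Derive_cutoff1 a w) by lra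
  | |- context [Derive (fun s => cutoff2 ?a ?w s) _] => rewrite (Derive_cutoff2 a w) by lra
  end.

Definition phase t := t / 3 + 2/3 * ramp_at (8/10) (4/10) t.
Definition phase1 t := 1/3 + 2/3 * cutoff (8/10) (4/10) t.
Definition phase2 t := 2/3 * cutoff1 (8/10) (4/10) t.
Definition phase3 t := 2/3 * cutoff2 (8/10) (4/10) t.

Lemma is_derive_phase t : is_derive phase t (phase1 t).
Proof.
  unfold phase, phase1; auto_derive; [eexists; apply is_derive_ramp_at; lra|].
  rewrite Derive_ramp_at by lra; R_eq; field.
Qed.

Lemma is_derive_phase1 t : is_derive phase1 t (phase2 t).
Proof. unfold phase1, phase2; auto_derive; ex_derive_cutoffs; Derive_cutoffs; R_eq; ring. Qed.

Lemma is_derive_phase2 t : is_derive phase2 t (phase3 t).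
Proof. unfold phase2, phase3; auto_derive; ex_derive_cutoffs; Derive_cutoffs; R_eq; ring. Qed.

Lemma Derive_phase t : Derive (fun s => phase s) t = phase1 t.
Proof. apply is_derive_unique, is_derive_phase. Qed.

Lemma Derive_phase1 t : Derive (fun s => phase1 s) t = phase2 t.
Proof. apply is_derive_unique, is_derive_phase1. Qed.

Lemma Derive_phase2 t : Derive (fun s => phase2 s) t = phase3 t.
Proof. apply is_derive_unique, is_derive_phase2. Qed.

Ltac ex_derive_profiles :=
  ex_derive_cutoffs;
  repeat match goal with
  | |- ex_derive (fun s => phase s) _ => eexists; apply is_derive_phase
  | |- ex_derive (fun s => phase1 s) _ => eexists; apply is_derive_phase1
  | |- ex_derive (fun s => phase2 s) _ => eexists; apply is_derive_phase2
  end.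

Ltac Derive_profiles :=
  Derive_cutoffs; rewrite ?Derive_phase, ?Derive_phase1, ?Derive_phase2.

Ltac solve_derive := auto_derive; ex_derive_profiles; Derive_profiles; R_eq.

Lemma phase_early t : t <= 8/10 -> phase t = t / 3.
Proof. intros; unfold phase; rewrite ramp_at_le by lra; ring. Qed.

Lemma phase_late t : 12/10 <= t -> phase t = t - 2/3.
Proof. intros; unfold phase; rewrite ramp_at_ge by lra; field. Qed.

Lemma phase_ge t : t / 3 <= phase t.
Proof. unfold phase; pose proof (ramp_at_nonneg (8/10) (4/10) ltac:(lra) t); lra. Qed.

Lemma phase1_bounds t : 1/3 <= phase1 t <= 1.
Proof. unfold phase1; pose proof (cutoff_bounds (8/10) (4/10) t); lra. Qed.

Lemma phase2_bounds t : 0 <= phase2 t <= 365/100.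
Proof. unfold phase2; pose proof (cutoff1_bounds (8/10) (4/10) ltac:(lra) t); lra. Qed.

Lemma Rabs_phase3_le t : Rabs (phase3 t) <= 113.
Proof.
  unfold phase3; rewrite Rabs_mult, Rabs_right by lra.
  pose proof (Rabs_cutoff2_le (8/10) (4/10) ltac:(lra) t); simpl in *; lra.
Qed.

Section Profiles.
Variables k k' : R.

Definition eps := exp (- k / 2 + k' / 6).

Definition fprof t := exp (- k * t) * (1 - cutoff (65/100) (1/10) t).
Definition fprof1 t :=
  exp (- k * t) * (- k * (1 - cutoff (65/100) (1/10) t) - cutoff1 (65/100) (1/10) t).
Definition fprof2 t := exp (- k * t) *
  (k^2 * (1 - cutoff (65/100) (1/10) t) + 2 * k * cutoff1 (65/100) (1/10) t
   - cutoff2 (65/100) (1/10) t).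

Definition gprof t := eps * cutoff (6/100) (1/100) t * exp (- k' * phase t).
Definition gprof1 t := eps * exp (- k' * phase t) *
  (cutoff1 (6/100) (1/100) t - k' * phase1 t * cutoff (6/100) (1/100) t).
Definition gprof2 t := eps * exp (- k' * phase t) *
  (cutoff2 (6/100) (1/100) t - 2 * k' * phase1 t * cutoff1 (6/100) (1/100) t
   - k' * phase2 t * cutoff (6/100) (1/100) t + k'^2 * phase1 t ^ 2 * cutoff (6/100) (1/100) t).

(* Chosen so that [b_yy k'^2 g = g''] wherever [g] is not being switched on. *)
Definition b_yy t := 1 - 8/9 * cutoff (1/100) (45/1000) t + phase1 t ^ 2 - 1/9 - phase2 t / k'.
Definition b_yy1 t :=
  - 8/9 * cutoff1 (1/100) (45/1000) t + 2 * phase1 t * phase2 t - phase3 t / k'.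

Definition rho1 t := eps / k * exp ((k - k'/3) * t) *
  (2 * k' / 3 * cutoff1 (6/100) (1/100) t - cutoff2 (6/100) (1/100) t).
Definition rho1' t := eps / k * exp ((k - k'/3) * t) *
  ((k - k'/3) * (2 * k' / 3 * cutoff1 (6/100) (1/100) t - cutoff2 (6/100) (1/100) t)
   + 2 * k' / 3 * cutoff2 (6/100) (1/100) t - cutoff3 (6/100) (1/100) t).
Definition rho2 t := / (eps * k') * exp (- (k - k'/3) * t) *
  (cutoff2 (65/100) (1/10) t - 2 * k * cutoff1 (65/100) (1/10) t).
Definition rho2' t := / (eps * k') * exp (- (k - k'/3) * t) *
  (- (k - k'/3) * (cutoff2 (65/100) (1/10) t - 2 * k * cutoff1 (65/100) (1/10) t)
   + cutoff3 (65/100) (1/10) t - 2 * k * cutoff2 (65/100) (1/10) t).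

Lemma eps_pos : 0 < eps.
Proof. apply exp_pos. Qed.

Lemma is_derive_fprof t : is_derive fprof t (fprof1 t).
Proof. unfold fprof, fprof1; solve_derive; ring. Qed.

Lemma is_derive_fprof1 t : is_derive fprof1 t (fprof2 t).
Proof. unfold fprof1, fprof2; solve_derive; ring. Qed.

Lemma is_derive_gprof t : is_derive gprof t (gprof1 t).
Proof. unfold gprof, gprof1; solve_derive; ring. Qed.

Lemma is_derive_gprof1 t : is_derive gprof1 t (gprof2 t).
Proof. unfold gprof1, gprof2; solve_derive; ring. Qed.

Lemma continuity_fprof2 : continuity fprof2.
Proof. apply continuity_ex_derive; intro; unfold fprof2; auto_derive; ex_derive_profiles. Qed.

Lemma continuity_gprof2 : continuity gprof2.
Proof. apply continuity_ex_derive; intro; unfold gprof2; auto_derive; ex_derive_profiles. Qed.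

Lemma continuity_b_yy1 : continuity b_yy1.
Proof.
  apply continuity_ex_derive; intro; unfold b_yy1, phase3; auto_derive; ex_derive_profiles.
Qed.

Section Nonzero.
Hypotheses (k_neq0 : k <> 0) (k'_neq0 : k' <> 0).

Lemma is_derive_b_yy t : is_derive b_yy t (b_yy1 t).
Proof. unfold b_yy, b_yy1; solve_derive; field; auto. Qed.

Lemma is_derive_rho1 t : is_derive rho1 t (rho1' t).
Proof. unfold rho1, rho1'; solve_derive; field; auto. Qed.

Lemma is_derive_rho2 t : is_derive rho2 t (rho2' t).
Proof. pose proof eps_pos; unfold rho2, rho2'; solve_derive; field; split; lra. Qed.

Lemma continuity_rho1' : continuity rho1'.
Proof.
  intro t; unfold rho1'; apply continuity_pt_mult.
  - apply continuity_ex_derive; intro; auto_derive; auto.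
  - apply continuity_pt_minus; [|apply continuity_cutoff3; lra].
    apply continuity_ex_derive; intro; auto_derive; ex_derive_profiles.
Qed.

Lemma continuity_rho2' : continuity rho2'.
Proof.
  intro t; unfold rho2'; apply continuity_pt_mult.
  - apply continuity_ex_derive; intro; auto_derive; auto.
  - apply continuity_pt_minus; [apply continuity_pt_plus; [|apply continuity_cutoff3; lra]|];
      apply continuity_ex_derive; intro; auto_derive; ex_derive_profiles.
Qed.

Lemma fprof_ode t : fprof2 t = k^2 * fprof t - rho2 t * k' * gprof t.
Proof.
  pose proof eps_pos.
  destruct (Rle_lt_dec t (65/100)) as [Ht|Ht]; [|destruct (Rle_lt_dec (75/100) t) as [Ht'|Ht']];
    unfold fprof2, fprof, rho2.
  1,2: rewrite cutoff1_out, cutoff2_out by lra; ring.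
  unfold gprof; rewrite (cutoff_ge (6/100)), phase_early by lra.
  replace (exp (- k * t)) with (exp (- (k - k'/3) * t) * exp (- k' * (t / 3)))
    by (rewrite <- exp_plus; f_equal; field).
  field; lra.
Qed.

Lemma gprof_ode t : gprof2 t = b_yy t * k'^2 * gprof t - rho1 t * k * fprof t.
Proof.
  pose proof eps_pos.
  destruct (Rle_lt_dec t (6/100)) as [Ht|Ht]; [|destruct (Rle_lt_dec (7/100) t) as [Ht'|Ht']];
    unfold gprof2, gprof, b_yy, rho1.
  - rewrite cutoff_le, cutoff1_out, cutoff2_out by lra; field; auto.
  - rewrite cutoff1_out, cutoff2_out, (cutoff_ge (1/100)) by lra; field; auto.
  - unfold fprof, phase1, phase2.
    rewrite (cutoff_ge (1/100)), (cutoff_le (65/100)), (cutoff_le (8/10)),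
      (cutoff1_out (8/10)), phase_early by lra.
    replace (exp (- k' * (t / 3))) with (exp ((k - k'/3) * t) * exp (- k * t))
      by (rewrite <- exp_plus; f_equal; field).
    field; auto.
Qed.

Lemma profiles_early t : t <= 1/100 ->
  fprof t = exp (- k * t) /\ gprof t = 0 /\ rho1 t = 0 /\ rho2 t = 0 /\ b_yy t = 1.
Proof.
  intros; unfold fprof, gprof, rho1, rho2, b_yy, phase1, phase2.
  rewrite !cutoff_le, !cutoff1_out, !cutoff2_out by lra.
  pose proof eps_pos; repeat split; field; repeat split; auto; lra.
Qed.

Lemma profiles_late t : 12/10 <= t ->
  fprof t = 0 /\ gprof t = exp (- k / 2 + 5 * k' / 6) * exp (- k' * t) /\
  rho1 t = 0 /\ rho2 t = 0 /\ b_yy t = 1.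
Proof.
  intros; unfold fprof, gprof, rho1, rho2, b_yy, phase1, phase2, eps.
  rewrite !cutoff_ge, !cutoff1_out, !cutoff2_out, phase_late by lra.
  pose proof (exp_pos (- k / 2 + k' / 6));
    repeat split; try (field; repeat split; auto; lra).
  rewrite Rmult_1_r, <- !exp_plus; f_equal; field.
Qed.

End Nonzero.
End Profiles.

(** * The solution and the coefficient field *)

Definition cos_mode k x := cos (k * x).
Definition cos_mode1 k x := - k * sin (k * x).
Definition cos_mode2 k x := - k^2 * cos (k * x).
Definition sin_mode k x := sin (k * x).
Definition sin_mode1 k x := k * cos (k * x).
Definition sin_mode2 k x := - k^2 * sin (k * x).

Lemma C1_deriv_const c : C1_deriv (fun _ => c) (fun _ => 0).
Proof.
  split; [intro; apply is_derive_const_fun|].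
  apply continuity_ex_derive; intro; auto_derive; auto.
Qed.

Lemma C1_deriv_scal a p p' : C1_deriv p p' -> C1_deriv (fun t => a * p t) (fun t => a * p' t).
Proof.
  intros [H1 H2]; split; [intro t; apply is_derive_scal, H1|].
  intro t; apply continuity_pt_mult; [apply continuity_pt_const; intros ? ?; auto|apply H2].
Qed.

Lemma C1_deriv_of_derive2 (p p' p'' : R -> R) :
  (forall t, is_derive p t (p' t)) -> (forall t, is_derive p' t (p'' t)) -> C1_deriv p p'.
Proof. intros H H'; split; auto. apply continuity_ex_derive; intro t; eexists; apply H'. Qed.

Lemma C1_deriv_cos_mode k : C1_deriv (cos_mode k) (cos_mode1 k).
Proof.
  apply C1_deriv_of_derive2 with (cos_mode2 k); intro; unfold cos_mode, cos_mode1, cos_mode2;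
    auto_derive; auto; R_eq; ring.
Qed.

Lemma C1_deriv_cos_mode1 k : C1_deriv (cos_mode1 k) (cos_mode2 k).
Proof.
  apply C1_deriv_of_derive2 with (fun x => k^3 * sin (k * x)); intro; unfold cos_mode1, cos_mode2;
    auto_derive; auto; R_eq; ring.
Qed.

Lemma C1_deriv_sin_mode k : C1_deriv (sin_mode k) (sin_mode1 k).
Proof.
  apply C1_deriv_of_derive2 with (sin_mode2 k); intro; unfold sin_mode, sin_mode1, sin_mode2;
    auto_derive; auto; R_eq; ring.
Qed.

Lemma C1_deriv_sin_mode1 k : C1_deriv (sin_mode1 k) (sin_mode2 k).
Proof.
  apply C1_deriv_of_derive2 with (fun x => - k^3 * cos (k * x)); intro; unfold sin_mode1, sin_mode2;
    auto_derive; auto; R_eq; ring.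
Qed.

Lemma C1_deriv_fprof k : C1_deriv (fprof k) (fprof1 k).
Proof.
  apply C1_deriv_of_derive2 with (fprof2 k); [apply is_derive_fprof|apply is_derive_fprof1].
Qed.

Lemma C1_deriv_fprof1 k : C1_deriv (fprof1 k) (fprof2 k).
Proof. split; [apply is_derive_fprof1|apply continuity_fprof2]. Qed.

Lemma C1_deriv_gprof k k' : C1_deriv (gprof k k') (gprof1 k k').
Proof.
  apply C1_deriv_of_derive2 with (gprof2 k k'); [apply is_derive_gprof|apply is_derive_gprof1].
Qed.

Lemma C1_deriv_gprof1 k k' : C1_deriv (gprof1 k k') (gprof2 k k').
Proof. split; [apply is_derive_gprof1|apply continuity_gprof2]. Qed.

Lemma C1_deriv_b_yy k' : k' <> 0 -> C1_deriv (b_yy k') (b_yy1 k').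
Proof. split; [apply is_derive_b_yy; auto|apply continuity_b_yy1]. Qed.

Lemma C1_deriv_rho1 k k' : k <> 0 -> C1_deriv (rho1 k k') (rho1' k k').
Proof. split; [apply is_derive_rho1; auto|apply continuity_rho1'; auto]. Qed.

Lemma C1_deriv_rho2 k k' : k' <> 0 -> C1_deriv (rho2 k k') (rho2' k k').
Proof. split; [apply is_derive_rho2; auto|apply continuity_rho2'; auto]. Qed.

Create HintDb C1_deriv.
Hint Constants Opaque : C1_deriv.
Hint Resolve C1_deriv_const C1_deriv_cos_mode C1_deriv_cos_mode1 C1_deriv_sin_mode
  C1_deriv_sin_mode1 C1_deriv_fprof C1_deriv_fprof1 C1_deriv_gprof C1_deriv_gprof1
  C1_deriv_b_yy C1_deriv_rho1 C1_deriv_rho2 : C1_deriv.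
Hint Extern 2 (C1_deriv (fun t => _ * _) _) => apply C1_deriv_scal : C1_deriv.

Lemma partials_tensor_sum p p' q q' r r' p2 p2' q2 q2' r2 r2' :
  C1_deriv p p' -> C1_deriv q q' -> C1_deriv r r' ->
  C1_deriv p2 p2' -> C1_deriv q2 q2' -> C1_deriv r2 r2' ->
  let F := add3 (tensor p q r) (tensor p2 q2 r2) in
  dx F = add3 (tensor p' q r) (tensor p2' q2 r2) /\
  dy F = add3 (tensor p q' r) (tensor p2 q2' r2) /\
  dt F = add3 (tensor p q r') (tensor p2 q2 r2').
Proof.
  intros Hp Hq Hr Hp2 Hq2 Hr2; cbv zeta.
  destruct (partials_add3 (tensor p q r) (tensor p2 q2 r2)) as [-> [-> ->]];
    try (eapply C1_3_tensor; eauto).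
  destruct (partials_tensor p p' q q' r r') as [-> [-> ->]]; auto.
  destruct (partials_tensor p2 p2' q2 q2' r2 r2') as [-> [-> ->]]; auto.
Qed.

Ltac split_and := repeat match goal with |- _ /\ _ => split end.

Ltac C1_3_tensors := repeat (apply C1_3_add3 || (eapply C1_3_tensor; eauto with C1_deriv)).

Section Field.
Variables k k' : R.

Definition sol : fun3 :=
  add3 (tensor (cos_mode k) (fun _ => 1) (fprof k))
       (tensor (fun _ => 1) (cos_mode k') (gprof k k')).

(* In [div (A grad u)] the [cos cos] corrections of the diagonal produce factors
   [cos^2 - sin^2], which the [sin sin] off-diagonal entries complete to [cos^2 + sin^2 = 1];
   what remains is the coupling [k rho1 f cos(k'y) + k' rho2 g cos(kx)]. *)
Definition coef_xx : fun3 := add3 (tensor (fun _ => 1) (fun _ => 1) (fun _ => 1))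
  (tensor (cos_mode k) (cos_mode k') (fun t => - / k * rho1 k k' t)).
Definition coef_xy : fun3 := tensor (sin_mode k) (sin_mode k') (fun t => -2 / k * rho2 k k' t).
Definition coef_yx : fun3 := tensor (sin_mode k) (sin_mode k') (fun t => -2 / k' * rho1 k k' t).
Definition coef_yy : fun3 := add3 (tensor (fun _ => 1) (fun _ => 1) (b_yy k'))
  (tensor (cos_mode k) (cos_mode k') (fun t => - / k' * rho2 k k' t)).
Definition coef := MatField coef_xx coef_xy coef_yx coef_yy.

Hypotheses (k_neq0 : k <> 0) (k'_neq0 : k' <> 0).

Lemma C2_3_sol : C2_3 sol.
Proof.
  unfold C2_3, sol;
  destruct (partials_tensor_sum (cos_mode k) (cos_mode1 k) (fun _ => 1) (fun _ => 0)
    (fprof k) (fprof1 k) (fun _ => 1) (fun _ => 0) (cos_mode k') (cos_mode1 k')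
    (gprof k k') (gprof1 k k')) as [-> [-> ->]]; auto with C1_deriv.
  split_and; C1_3_tensors.
Qed.

Lemma partials_sol :
  dx sol = add3 (tensor (cos_mode1 k) (fun _ => 1) (fprof k))
                (tensor (fun _ => 0) (cos_mode k') (gprof k k')) /\
  dy sol = add3 (tensor (cos_mode k) (fun _ => 0) (fprof k))
                (tensor (fun _ => 1) (cos_mode1 k') (gprof k k')) /\
  dt (dt sol) = add3 (tensor (cos_mode k) (fun _ => 1) (fprof2 k))
                     (tensor (fun _ => 1) (cos_mode k') (gprof2 k k')).
Proof.
  unfold sol; destruct (partials_tensor_sum (cos_mode k) (cos_mode1 k) (fun _ => 1) (fun _ => 0)
    (fprof k) (fprof1 k) (fun _ => 1) (fun _ => 0) (cos_mode k') (cos_mode1 k')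
    (gprof k k') (gprof1 k k')) as [-> [-> ->]]; auto with C1_deriv.
  split; [|split]; auto.
  apply (partials_tensor_sum (cos_mode k) (cos_mode1 k) (fun _ => 1) (fun _ => 0)
    (fprof1 k) (fprof2 k) (fun _ => 1) (fun _ => 0) (cos_mode k') (cos_mode1 k')
    (gprof1 k k') (gprof2 k k')); auto with C1_deriv.
Qed.

Lemma pde_sol x y t : pde_holds coef sol x y t.
Proof.
  destruct partials_sol as [Ex [Ey Ett]].
  unfold pde_holds; rewrite Ett, Ex, Ey; simpl.
  unfold coef_xx, coef_xy, coef_yx, coef_yy, add3, tensor, cos_mode, cos_mode1, sin_mode.
  erewrite is_derive_unique by (auto_derive; auto; reflexivity).
  erewrite is_derive_unique by (auto_derive; auto; reflexivity).
  rewrite (fprof_ode k k' k'_neq0 t), (gprof_ode k k' k_neq0 k'_neq0 t).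
  R_eq; transitivity
    (k * rho1 k k' t * fprof k t * cos (k' * y) * (Rsqr (sin (k * x)) + Rsqr (cos (k * x)) - 1)
     + k' * rho2 k k' t * gprof k k' t * cos (k * x)
       * (Rsqr (sin (k' * y)) + Rsqr (cos (k' * y)) - 1)).
  - unfold Rsqr; field; auto.
  - rewrite !sin2_cos2; ring.
Qed.

Lemma C1_3_coef_entries : C1_3 coef_xx /\ C1_3 coef_xy /\ C1_3 coef_yx /\ C1_3 coef_yy.
Proof. unfold coef_xx, coef_xy, coef_yx, coef_yy; split_and; C1_3_tensors. Qed.

Lemma sol_early x y t : t <= 1/100 ->
  sol x y t = cos (k * x) * exp (- k * t) /\ is_Id_at coef x y t.
Proof.
  intros Ht; destruct (profiles_early k k' k_neq0 k'_neq0 t Ht) as [E1 [E2 [E3 [E4 E5]]]].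
  unfold sol, is_Id_at, coef; simpl.
  unfold coef_xx, coef_xy, coef_yx, coef_yy, add3, tensor, cos_mode.
  rewrite E1, E2, E3, E4, E5; repeat split; ring.
Qed.

Lemma sol_late x y t : 12/10 <= t ->
  sol x y t = exp (- k / 2 + 5 * k' / 6) * cos (k' * y) * exp (- k' * t) /\ is_Id_at coef x y t.
Proof.
  intros Ht; destruct (profiles_late k k' k_neq0 k'_neq0 t Ht) as [E1 [E2 [E3 [E4 E5]]]].
  unfold sol, is_Id_at, coef; simpl.
  unfold coef_xx, coef_xy, coef_yx, coef_yy, add3, tensor, cos_mode.
  rewrite E1, E2, E3, E4, E5; repeat split; ring.
Qed.

End Field.

Lemma cos_sin_mode_periodic (n : Z) x : (0 <= n)%Z ->
  cos_mode (IZR n) (x + 2 * PI) = cos_mode (IZR n) x /\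
  sin_mode (IZR n) (x + 2 * PI) = sin_mode (IZR n) x.
Proof.
  intros Hn; unfold cos_mode, sin_mode; rewrite <- (Z2Nat.id n Hn), <- INR_IZR_INZ.
  replace (INR (Z.to_nat n) * (x + 2 * PI)) with (INR (Z.to_nat n) * x + 2 * INR (Z.to_nat n) * PI)
    by ring.
  rewrite cos_period, sin_period; auto.
Qed.

Lemma periodic_tensor p q r :
  (forall x, p (x + 2 * PI) = p x) -> (forall y, q (y + 2 * PI) = q y) ->
  periodic_T2 (tensor p q r).
Proof. intros Hp Hq x y t; unfold tensor; rewrite Hp, Hq; auto. Qed.

Lemma periodic_add3 F G : periodic_T2 F -> periodic_T2 G -> periodic_T2 (add3 F G).
Proof. intros HF HG x y t; unfold add3; destruct (HF x y t), (HG x y t); split; congruence. Qed.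

Lemma periodic_sol_coef (n n' : Z) : (0 <= n)%Z -> (0 <= n')%Z ->
  let k := IZR n in let k' := IZR n' in
  periodic_T2 (sol k k') /\ periodic_T2 (coef_xx k k') /\ periodic_T2 (coef_xy k k') /\
  periodic_T2 (coef_yx k k') /\ periodic_T2 (coef_yy k k').
Proof.
  intros Hn Hn' k k'.
  pose proof (fun x => cos_sin_mode_periodic n x Hn) as Pn.
  pose proof (fun x => cos_sin_mode_periodic n' x Hn') as Pn'.
  unfold sol, coef_xx, coef_xy, coef_yx, coef_yy; split_and;
    repeat apply periodic_add3; apply periodic_tensor; intro; try reflexivity;
    first [apply Pn | apply Pn'].
Qed.

(** * Estimates for large frequencies *)

Lemma exp_neg_le_inv x : 0 < x -> exp (- x) <= 1 / x.
Proof.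
  intros; rewrite exp_Ropp; pose proof (exp_ineq1_le x).
  unfold Rdiv; rewrite Rmult_1_l; apply Rinv_le_contravar; lra.
Qed.

Lemma exp_le_exp x y : x <= y -> exp x <= exp y.
Proof. intros [H| ->]; [apply Rlt_le, exp_increasing; auto|lra]. Qed.

Lemma Rabs_minus_le a b : Rabs (a - b) <= Rabs a + Rabs b.
Proof. unfold Rminus; eapply Rle_trans; [apply Rabs_triang|]; rewrite Rabs_Ropp; lra. Qed.

Lemma Rabs_scal_le s r B : 0 <= s -> Rabs r <= B -> Rabs (s * r) <= s * B.
Proof. intros; rewrite Rabs_mult, Rabs_right by lra; apply Rmult_le_compat_l; lra. Qed.

Ltac rewrite_zero_Rabs :=
  match goal with |- Rabs ?e <= _ => replace e with 0 by ring; rewrite Rabs_R0 end.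

Lemma Rabs_cos_le x : Rabs (cos x) <= 1.
Proof. apply Rabs_le_between, COS_bound. Qed.

Lemma Rabs_sin_le x : Rabs (sin x) <= 1.
Proof. apply Rabs_le_between, SIN_bound. Qed.

Lemma quad_form_bounds a b c d xi1 xi2 :
  Rabs (a - 1) <= 1/100 -> Rabs b <= 1/100 -> Rabs c <= 1/100 -> 1/20 <= d <= 3 ->
  let q := xi1 * (a * xi1 + b * xi2) + xi2 * (c * xi1 + d * xi2) in
  / 80 * (xi1 ^ 2 + xi2 ^ 2) <= q /\ q <= 80 * (xi1 ^ 2 + xi2 ^ 2).
Proof.
  intros Ha Hb Hc Hd q.
  apply Rabs_le_between' in Ha.
  assert (Hbc : Rabs ((b + c) * (xi1 * xi2)) <= 1/100 * (xi1 ^ 2 + xi2 ^ 2)).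
  { rewrite Rabs_mult; apply Rle_trans with (2/100 * Rabs (xi1 * xi2)).
    - apply Rmult_le_compat_r; [apply Rabs_pos|].
      eapply Rle_trans; [apply Rabs_triang|lra].
    - assert (Rabs (xi1 * xi2) <= (xi1 ^ 2 + xi2 ^ 2) / 2); [|lra].
      pose proof (pow2_ge_0 (xi1 - xi2)); pose proof (pow2_ge_0 (xi1 + xi2)).
      apply Rabs_le_between; split; nra. }
  apply Rabs_le_between in Hbc.
  assert (0 <= xi1 ^ 2) by apply pow2_ge_0; assert (0 <= xi2 ^ 2) by apply pow2_ge_0.
  replace q with (a * xi1 ^ 2 + (b + c) * (xi1 * xi2) + d * xi2 ^ 2) by (unfold q; ring).
  split; nra.
Qed.

Lemma Rabs_tensor_le p q r P Q S x y t :
  Rabs (p x) <= P -> Rabs (q y) <= Q -> Rabs (r t) <= S -> Rabs (tensor p q r x y t) <= P * Q * S.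
Proof.
  intros; unfold tensor; rewrite !Rabs_mult.
  pose proof (Rabs_pos (p x)); pose proof (Rabs_pos (q y)); pose proof (Rabs_pos (r t)).
  apply Rmult_le_compat; try apply Rmult_le_compat; try apply Rmult_le_pos; auto.
Qed.

Lemma Rabs_add3_le F G A B x y t :
  Rabs (F x y t) <= A -> Rabs (G x y t) <= B -> Rabs (add3 F G x y t) <= A + B.
Proof. intros; unfold add3; eapply Rle_trans; [apply Rabs_triang|lra]. Qed.

Lemma Rabs_scal_mult_le a r B : Rabs r <= B -> Rabs (a * r) <= Rabs a * B.
Proof. intros; rewrite Rabs_mult; apply Rmult_le_compat_l; [apply Rabs_pos|auto]. Qed.

Lemma Derive_n_1_eq (f f1 : R -> R) t : (forall s, is_derive f s (f1 s)) -> Derive_n f 1 t = f1 t.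
Proof. intros H; apply is_derive_unique, H. Qed.

Lemma Derive_n_2_eq (f f1 f2 : R -> R) t :
  (forall s, is_derive f s (f1 s)) -> (forall s, is_derive f1 s (f2 s)) -> Derive_n f 2 t = f2 t.
Proof.
  intros H H'; apply is_derive_unique.
  apply is_derive_ext with f1; [intro; symmetry; apply Derive_n_1_eq, H|apply H'].
Qed.

Lemma C2_1_of_derivs (f f1 f2 : R -> R) :
  (forall t, is_derive f t (f1 t)) -> (forall t, is_derive f1 t (f2 t)) -> continuity f2 -> C2_1 f.
Proof.
  intros H H' Hc; split; [|split].
  - intro t; eexists; apply H.
  - intro t; apply ex_derive_ext with f1; [intro; symmetry; apply is_derive_unique, H|].
    eexists; apply H'.
  - intro t; apply continuity_pt_ext with f2; [intro; symmetry; apply Derive_n_2_eq with f1; auto|].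
    apply Hc.
Qed.

Lemma Rabs_cos_mode1_le k x : 0 <= k -> Rabs (cos_mode1 k x) <= k.
Proof.
  intros; unfold cos_mode1; rewrite <- Ropp_mult_distr_l, Rabs_Ropp.
  apply Rle_trans with (k * 1); [apply Rabs_scal_le; [lra|apply Rabs_sin_le]|lra].
Qed.

Lemma Rabs_sin_mode1_le k x : 0 <= k -> Rabs (sin_mode1 k x) <= k.
Proof.
  intros; unfold sin_mode1.
  apply Rle_trans with (k * 1); [apply Rabs_scal_le; [lra|apply Rabs_cos_le]|lra].
Qed.

Section Bounds.
Variables k k' : R.
Hypotheses (k_large : 1000000 <= k) (k_lt_k' : k < k') (k'_le : k' <= 2 * k).

(* [eps exp ((k - k'/3) t)] is the ratio [g/f] before the time change; the amplitude [eps] is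
   chosen so that [g/f <= 10/k] while [g] is switched on and [f/g <= 20/k] while [f] is
   switched off. *)
Lemma switch_on_weight t : t <= 7/100 -> eps k k' * exp ((k - k'/3) * t) <= 10 / k.
Proof.
  intros Ht; unfold eps; rewrite <- exp_plus.
  replace (10 / k) with (1 / (k / 10)) by (field; lra).
  eapply Rle_trans; [apply exp_le_exp|apply exp_neg_le_inv; lra]; nra.
Qed.

Lemma switch_off_weight t : 65/100 <= t -> / eps k k' * exp (- (k - k'/3) * t) <= 20 / k.
Proof.
  intros Ht; unfold eps; rewrite <- exp_Ropp, <- exp_plus.
  replace (20 / k) with (1 / (k / 20)) by (field; lra).
  eapply Rle_trans; [apply exp_le_exp|apply exp_neg_le_inv; lra]; nra.
Qed.

Lemma Rabs_rho1_le t : Rabs (rho1 k k' t) <= 1 /\ Rabs (rho1' k k' t) <= k.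
Proof.
  destruct (Rle_lt_dec t (6/100)) as [Ht|Ht]; [|destruct (Rle_lt_dec (7/100) t) as [Ht'|Ht']].
  1,2: unfold rho1, rho1'; rewrite cutoff1_out, cutoff2_out, cutoff3_out by lra;
    split; rewrite_zero_Rabs; lra.
  pose proof (Rabs_cutoff1_le (6/100) (1/100) ltac:(lra) t) as C1.
  pose proof (Rabs_cutoff2_le (6/100) (1/100) ltac:(lra) t) as C2.
  pose proof (Rabs_cutoff3_le (6/100) (1/100) ltac:(lra) t) as C3.
  set (c1 := cutoff1 (6/100) (1/100) t) in *; set (c2 := cutoff2 (6/100) (1/100) t) in *;
    set (c3 := cutoff3 (6/100) (1/100) t) in *; simpl in C2, C3.
  assert (HX : Rabs (2 * k' / 3 * c1 - c2) <= 292 * k).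
  { pose proof (Rabs_scal_le (2 * k' / 3) c1 _ ltac:(lra) C1).
    eapply Rle_trans; [apply Rabs_minus_le|lra]. }
  assert (HY : Rabs ((k - k'/3) * (2 * k' / 3 * c1 - c2) + 2 * k' / 3 * c2 - c3) <= 293 * k^2).
  { pose proof (Rabs_scal_le (k - k'/3) _ _ ltac:(lra) HX).
    pose proof (Rabs_scal_le (2 * k' / 3) c2 _ ltac:(lra) C2).
    eapply Rle_trans; [apply Rabs_minus_le|].
    eapply Rle_trans; [apply Rplus_le_compat_r, Rabs_triang|].
    assert (k * k >= 1000000 * k) by nra. simpl; nra. }
  pose proof (switch_on_weight t ltac:(lra)) as W.
  assert (W0 : 0 < eps k k' * exp ((k - k'/3) * t)) by (apply Rmult_lt_0_compat; apply exp_pos).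
  assert (HE : 0 <= eps k k' / k * exp ((k - k'/3) * t) <= 10 / k^2).
  { replace (eps k k' / k * exp ((k - k'/3) * t)) with (eps k k' * exp ((k - k'/3) * t) / k)
      by (field; lra).
    replace (10 / k^2) with ((10 / k) / k) by (field; lra).
    split; [apply Rmult_le_pos|apply Rmult_le_compat_r]; try lra;
      apply Rlt_le, Rinv_0_lt_compat; lra. }
  unfold rho1, rho1'; fold c1 c2 c3; split.
  - eapply Rle_trans; [apply Rabs_scal_le; [lra|apply HX]|].
    apply Rle_trans with (10 / k^2 * (292 * k)); [apply Rmult_le_compat_r; lra|].
    replace (10 / k^2 * (292 * k)) with (2920 / k) by (field; lra).
    apply Rmult_le_reg_r with k; [lra|]; unfold Rdiv; rewrite Rmult_assoc, Rinv_l; lra.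
  - eapply Rle_trans; [apply Rabs_scal_le; [lra|apply HY]|].
    apply Rle_trans with (10 / k^2 * (293 * k^2)); [apply Rmult_le_compat_r; nra|].
    replace (10 / k^2 * (293 * k^2)) with 2930 by (field; lra); lra.
Qed.

Lemma Rabs_rho2_le t : Rabs (rho2 k k' t) <= 1 /\ Rabs (rho2' k k' t) <= k.
Proof.
  destruct (Rle_lt_dec t (65/100)) as [Ht|Ht]; [|destruct (Rle_lt_dec (75/100) t) as [Ht'|Ht']].
  1,2: unfold rho2, rho2'; rewrite cutoff1_out, cutoff2_out, cutoff3_out by lra;
    split; rewrite_zero_Rabs; lra.
  pose proof (Rabs_cutoff1_le (65/100) (1/10) ltac:(lra) t) as C1.
  pose proof (Rabs_cutoff2_le (65/100) (1/10) ltac:(lra) t) as C2.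
  pose proof (Rabs_cutoff3_le (65/100) (1/10) ltac:(lra) t) as C3.
  set (c1 := cutoff1 (65/100) (1/10) t) in *; set (c2 := cutoff2 (65/100) (1/10) t) in *;
    set (c3 := cutoff3 (65/100) (1/10) t) in *; simpl in C2, C3.
  assert (HX : Rabs (c2 - 2 * k * c1) <= 44 * k).
  { pose proof (Rabs_scal_le (2 * k) c1 _ ltac:(lra) C1).
    eapply Rle_trans; [apply Rabs_minus_le|lra]. }
  assert (HY : Rabs (- (k - k'/3) * (c2 - 2 * k * c1) + c3 - 2 * k * c2) <= 45 * k^2).
  { assert (Rabs (- (k - k'/3) * (c2 - 2 * k * c1)) <= (k - k'/3) * (44 * k))
      by (rewrite Rabs_mult, Rabs_left1, Ropp_involutive by lra; apply Rmult_le_compat_l; lra).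
    pose proof (Rabs_scal_le (2 * k) c2 _ ltac:(lra) C2).
    eapply Rle_trans; [apply Rabs_minus_le|].
    eapply Rle_trans; [apply Rplus_le_compat_r, Rabs_triang|].
    assert (k * k >= 1000000 * k) by nra. simpl; nra. }
  pose proof (switch_off_weight t ltac:(lra)) as W.
  assert (W0 : 0 < / eps k k' * exp (- (k - k'/3) * t))
    by (apply Rmult_lt_0_compat; [apply Rinv_0_lt_compat, eps_pos|apply exp_pos]).
  assert (HE : 0 <= / (eps k k' * k') * exp (- (k - k'/3) * t) <= 20 / (k * k')).
  { pose proof (eps_pos k k').
    replace (/ (eps k k' * k') * exp (- (k - k'/3) * t))
      with (/ eps k k' * exp (- (k - k'/3) * t) / k') by (field; lra).
    replace (20 / (k * k')) with ((20 / k) / k') by (field; lra).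
    split; [apply Rmult_le_pos|apply Rmult_le_compat_r]; try lra;
      apply Rlt_le, Rinv_0_lt_compat; lra. }
  unfold rho2, rho2'; fold c1 c2 c3; split.
  - eapply Rle_trans; [apply Rabs_scal_le; [lra|apply HX]|].
    apply Rle_trans with (20 / (k * k') * (44 * k)); [apply Rmult_le_compat_r; lra|].
    replace (20 / (k * k') * (44 * k)) with (880 / k') by (field; lra).
    apply Rmult_le_reg_r with k'; [lra|]; unfold Rdiv; rewrite Rmult_assoc, Rinv_l; lra.
  - eapply Rle_trans; [apply Rabs_scal_le; [lra|apply HY]|].
    apply Rle_trans with (20 / (k * k') * (45 * k^2)); [apply Rmult_le_compat_r; nra|].
    replace (20 / (k * k') * (45 * k^2)) with (900 * k / k') by (field; lra).
    apply Rmult_le_reg_r with k'; [lra|]; unfold Rdiv; rewrite Rmult_assoc, Rinv_l; nra.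
Qed.

Lemma b_yy_bounds t : 1/10 <= b_yy k' t <= 2.
Proof.
  unfold b_yy; pose proof (cutoff_bounds (1/100) (45/1000) t).
  pose proof (phase1_bounds t); pose proof (phase2_bounds t).
  assert (0 <= phase2 t / k' <= 1/100).
  { split; [apply Rmult_le_pos; [lra|apply Rlt_le, Rinv_0_lt_compat; lra]|].
    apply Rmult_le_reg_r with k'; [lra|]; unfold Rdiv; rewrite Rmult_assoc, Rinv_l; lra. }
  nra.
Qed.

Lemma Rabs_b_yy1_le t : Rabs (b_yy1 k' t) <= 44.
Proof.
  unfold b_yy1; destruct (Rle_lt_dec t (8/10)).
  - unfold phase2, phase3; rewrite (cutoff1_out (8/10)), (cutoff2_out (8/10)) by lra.
    replace (- 8 / 9 * cutoff1 (1/100) (45/1000) t + 2 * phase1 t * (2 / 3 * 0) - 2 / 3 * 0 / k')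
      with (-8/9 * cutoff1 (1/100) (45/1000) t) by (field; lra).
    pose proof (cutoff1_bounds (1/100) (45/1000) ltac:(lra) t).
    rewrite Rabs_mult, (Rabs_left (-8/9)), (Rabs_right (cutoff1 _ _ t)) by lra; lra.
  - rewrite (cutoff1_out (1/100)) by lra.
    pose proof (phase1_bounds t); pose proof (phase2_bounds t); pose proof (Rabs_phase3_le t).
    assert (Rabs (phase3 t / k') <= 1).
    { unfold Rdiv; rewrite Rabs_mult, (Rabs_right (/ k'))
        by (apply Rle_ge, Rlt_le, Rinv_0_lt_compat; lra).
      apply Rmult_le_reg_r with k'; [lra|]; rewrite Rmult_assoc, Rinv_l; nra. }
    replace (- 8 / 9 * 0 + 2 * phase1 t * phase2 t - phase3 t / k')
      with (2 * phase1 t * phase2 t - phase3 t / k') by ring.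
    eapply Rle_trans; [apply Rabs_minus_le|]; rewrite Rabs_right; nra.
Qed.

Lemma fprof_derivs_le t :
  Rabs (fprof k t) <= exp (- k * t) /\ Rabs (fprof1 k t) <= 2 * k * exp (- k * t) /\
  Rabs (fprof2 k t) <= 2 * k^2 * exp (- k * t).
Proof.
  pose proof (exp_pos (- k * t)) as He.
  pose proof (cutoff_bounds (65/100) (1/10) t) as S.
  pose proof (Rabs_cutoff1_le (65/100) (1/10) ltac:(lra) t) as S1.
  pose proof (Rabs_cutoff2_le (65/100) (1/10) ltac:(lra) t) as S2; simpl in S2.
  unfold fprof, fprof1, fprof2; rewrite !Rabs_mult, !(Rabs_right (exp _)) by lra.
  repeat split; rewrite Rmult_comm.
  - rewrite <- (Rmult_1_l (exp _)) at 2; apply Rmult_le_compat_r; [lra|].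
    rewrite Rabs_right; lra.
  - apply Rmult_le_compat_r; [lra|].
    eapply Rle_trans; [apply Rabs_minus_le|].
    rewrite Rabs_mult, Rabs_left1, Rabs_right by lra; nra.
  - apply Rmult_le_compat_r; [lra|].
    eapply Rle_trans; [apply Rabs_minus_le|].
    eapply Rle_trans; [apply Rplus_le_compat_r, Rabs_triang|].
    rewrite !Rabs_mult, !Rabs_right by nra.
    assert (k * k >= 1000000 * k) by nra. simpl; nra.
Qed.

Lemma gprof_weight_le t :
  eps k k' * exp (- k' * phase t) <= exp (- k / 2 + 5 * k' / 6) * exp (- k' * t / 3).
Proof.
  unfold eps; rewrite <- !exp_plus; apply exp_le_exp.
  pose proof (phase_ge t); nra.
Qed.

Lemma gprof_derivs_le t :
  let B := exp (- k / 2 + 5 * k' / 6) * exp (- k' * t / 3) in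
  Rabs (gprof k k' t) <= B /\ Rabs (gprof1 k k' t) <= 2 * k' * B /\
  Rabs (gprof2 k k' t) <= 2 * k'^2 * B.
Proof.
  intros B; pose proof (gprof_weight_le t) as HW; fold B in HW.
  set (W := eps k k' * exp (- k' * phase t)) in *.
  assert (W0 : 0 < W) by (apply Rmult_lt_0_compat; [apply eps_pos|apply exp_pos]).
  pose proof (cutoff_bounds (6/100) (1/100) t) as S.
  pose proof (cutoff1_bounds (6/100) (1/100) ltac:(lra) t) as S1.
  pose proof (Rabs_cutoff2_le (6/100) (1/100) ltac:(lra) t) as S2; simpl in S2.
  pose proof (phase1_bounds t); pose proof (phase2_bounds t).
  set (s := cutoff (6/100) (1/100) t) in *; set (s1 := cutoff1 (6/100) (1/100) t) in *;
    set (s2 := cutoff2 (6/100) (1/100) t) in *.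
  assert (k' * k' >= 1000000 * k') by nra.
  assert (0 <= phase1 t * s <= 1) by (split; nra).
  unfold gprof, gprof1, gprof2; fold s s1 s2 W; repeat split.
  - replace (eps k k' * s * exp (- k' * phase t)) with (W * s) by (unfold W; ring).
    rewrite Rabs_mult, !Rabs_right by lra.
    apply Rle_trans with (W * 1); [apply Rmult_le_compat_l|]; lra.
  - rewrite Rabs_mult, Rabs_right by lra.
    assert (Rabs (s1 - k' * phase1 t * s) <= 2 * k').
    { eapply Rle_trans; [apply Rabs_minus_le|].
      rewrite !Rabs_mult, !Rabs_right by lra; nra. }
    apply Rle_trans with (W * (2 * k')); [apply Rmult_le_compat_l; lra|nra].
  - rewrite Rabs_mult, Rabs_right by lra.
    assert (Rabs (s2 - 2 * k' * phase1 t * s1 - k' * phase2 t * s + k'^2 * phase1 t ^ 2 * s)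
      <= 2 * k'^2).
    { eapply Rle_trans; [apply Rabs_triang|].
      eapply Rle_trans; [apply Rplus_le_compat_r, Rabs_minus_le|].
      eapply Rle_trans; [apply Rplus_le_compat_r, Rplus_le_compat_r, Rabs_minus_le|].
      rewrite !Rabs_mult, !(Rabs_right k'), !(Rabs_right (phase1 t)), !(Rabs_right (phase2 t)),
        !(Rabs_right s), !(Rabs_right s1), !(Rabs_right 2), !(Rabs_right (k'^2)),
        !(Rabs_right (phase1 t ^ 2)) by nra.
      assert (k' * (phase1 t * s1) <= k' * (21875/100))
        by (apply Rmult_le_compat_l; nra).
      assert (k' * (phase2 t * s) <= k' * (365/100)) by (apply Rmult_le_compat_l; nra).
      assert (k'^2 * (phase1 t ^ 2 * s) <= k'^2 * 1) by (apply Rmult_le_compat_l; simpl; nra).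
      simpl in *; nra. }
    apply Rle_trans with (W * (2 * k'^2)); [apply Rmult_le_compat_l; lra|nra].
Qed.

Ltac bound_factor :=
  match goal with
  | |- Rabs (add3 _ _ _ _ _) <= _ => apply Rabs_add3_le
  | |- Rabs (tensor _ _ _ _ _ _) <= _ => apply Rabs_tensor_le
  | |- Rabs (cos_mode _ _) <= _ => apply Rabs_cos_le
  | |- Rabs (sin_mode _ _) <= _ => apply Rabs_sin_le
  | |- Rabs (cos_mode1 _ _) <= _ => apply Rabs_cos_mode1_le; lra
  | |- Rabs (sin_mode1 _ _) <= _ => apply Rabs_sin_mode1_le; lra
  | |- Rabs (rho1 _ _ ?t) <= _ => apply (Rabs_rho1_le t)
  | |- Rabs (rho1' _ _ ?t) <= _ => apply (Rabs_rho1_le t)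
  | |- Rabs (rho2 _ _ ?t) <= _ => apply (Rabs_rho2_le t)
  | |- Rabs (rho2' _ _ ?t) <= _ => apply (Rabs_rho2_le t)
  | |- Rabs (b_yy1 _ _) <= _ => apply Rabs_b_yy1_le
  | |- Rabs (_ * _) <= _ => apply Rabs_scal_mult_le
  | |- Rabs _ <= _ => apply Rle_refl
  end.

Ltac bound_scalars :=
  unfold Rdiv; rewrite ?Rabs_mult, ?Rabs_Ropp, ?Rabs_inv, ?Rabs_R0, ?Rabs_R1,
    ?(Rabs_right k), ?(Rabs_right k'), ?(Rabs_left (-2)) by lra;
  assert (k * / k = 1) by (field; lra); assert (k' * / k' = 1) by (field; lra);
  assert (0 < / k) by (apply Rinv_0_lt_compat; lra);
  assert (0 < / k') by (apply Rinv_0_lt_compat; lra);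
  assert (k' * / k <= 2)
    by (apply Rmult_le_reg_r with k; [lra|]; rewrite Rmult_assoc, Rinv_l; lra);
  assert (k * / k' <= 1)
    by (apply Rmult_le_reg_r with k'; [lra|]; rewrite Rmult_assoc, Rinv_l; lra);
  nra.

Lemma coef_xx_partials_le x y t :
  Rabs (dx (coef_xx k k') x y t) <= 60 /\ Rabs (dy (coef_xx k k') x y t) <= 60 /\
  Rabs (dt (coef_xx k k') x y t) <= 60.
Proof.
  assert (k <> 0) by lra; assert (k' <> 0) by lra.
  unfold coef_xx; destruct (partials_tensor_sum (fun _ => 1) (fun _ => 0) (fun _ => 1) (fun _ => 0)
    (fun _ => 1) (fun _ => 0) (cos_mode k) (cos_mode1 k) (cos_mode k') (cos_mode1 k')
    (fun t => - / k * rho1 k k' t) (fun t => - / k * rho1' k k' t)) as [-> [-> ->]];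
    auto with C1_deriv.
  repeat split; (eapply Rle_trans; [repeat bound_factor|bound_scalars]).
Qed.

Lemma coef_xy_partials_le x y t :
  Rabs (dx (coef_xy k k') x y t) <= 60 /\ Rabs (dy (coef_xy k k') x y t) <= 60 /\
  Rabs (dt (coef_xy k k') x y t) <= 60.
Proof.
  assert (k <> 0) by lra; assert (k' <> 0) by lra.
  unfold coef_xy; destruct (partials_tensor (sin_mode k) (sin_mode1 k) (sin_mode k') (sin_mode1 k')
    (fun t : R => -2 / k * rho2 k k' t) (fun t : R => -2 / k * rho2' k k' t)) as [-> [-> ->]];
    auto with C1_deriv.
  repeat split; (eapply Rle_trans; [repeat bound_factor|bound_scalars]).
Qed.

Lemma coef_yx_partials_le x y t :
  Rabs (dx (coef_yx k k') x y t) <= 60 /\ Rabs (dy (coef_yx k k') x y t) <= 60 /\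
  Rabs (dt (coef_yx k k') x y t) <= 60.
Proof.
  assert (k <> 0) by lra; assert (k' <> 0) by lra.
  unfold coef_yx; destruct (partials_tensor (sin_mode k) (sin_mode1 k) (sin_mode k') (sin_mode1 k')
    (fun t : R => -2 / k' * rho1 k k' t) (fun t : R => -2 / k' * rho1' k k' t)) as [-> [-> ->]];
    auto with C1_deriv.
  repeat split; (eapply Rle_trans; [repeat bound_factor|bound_scalars]).
Qed.

Lemma coef_yy_partials_le x y t :
  Rabs (dx (coef_yy k k') x y t) <= 60 /\ Rabs (dy (coef_yy k k') x y t) <= 60 /\
  Rabs (dt (coef_yy k k') x y t) <= 60.
Proof.
  assert (k <> 0) by lra; assert (k' <> 0) by lra.
  unfold coef_yy; destruct (partials_tensor_sum (fun _ => 1) (fun _ => 0) (fun _ => 1) (fun _ => 0)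
    (b_yy k') (b_yy1 k') (cos_mode k) (cos_mode1 k) (cos_mode k') (cos_mode1 k')
    (fun t => - / k' * rho2 k k' t) (fun t => - / k' * rho2' k k' t)) as [-> [-> ->]];
    auto with C1_deriv.
  repeat split; (eapply Rle_trans; [repeat bound_factor|bound_scalars]).
Qed.

Lemma coef_near_diag x y t :
  Rabs (coef_xx k k' x y t - 1) <= 1/100 /\ Rabs (coef_xy k k' x y t) <= 1/100 /\
  Rabs (coef_yx k k' x y t) <= 1/100 /\ Rabs (coef_yy k k' x y t - b_yy k' t) <= 1/100.
Proof.
  replace (coef_xx k k' x y t - 1)
    with (tensor (cos_mode k) (cos_mode k') (fun t => - / k * rho1 k k' t) x y t)
    by (unfold coef_xx, add3, tensor; ring).
  replace (coef_yy k k' x y t - b_yy k' t)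
    with (tensor (cos_mode k) (cos_mode k') (fun t => - / k' * rho2 k k' t) x y t)
    by (unfold coef_yy, add3, tensor; ring).
  unfold coef_xy, coef_yx.
  repeat split; (eapply Rle_trans; [repeat bound_factor|bound_scalars]).
Qed.

Lemma coef_elliptic x y t xi1 xi2 :
  let A := coef k k' in
  let q := xi1 * (axx A x y t * xi1 + axy A x y t * xi2)
         + xi2 * (ayx A x y t * xi1 + ayy A x y t * xi2) in
  / 80 * (xi1 ^ 2 + xi2 ^ 2) <= q /\ q <= 80 * (xi1 ^ 2 + xi2 ^ 2).
Proof.
  destruct (coef_near_diag x y t) as [Hxx [Hxy [Hyx Hyy]]].
  pose proof (b_yy_bounds t); apply Rabs_le_between' in Hyy.
  apply quad_form_bounds; simpl; auto; lra.
Qed.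

Lemma reg_class_coef : reg_class 80 60 (coef k k').
Proof.
  assert (k <> 0) by lra; assert (k' <> 0) by lra.
  split; [apply coef_elliptic; auto|].
  intros a Ha; destruct (C1_3_coef_entries k k') as [Cxx [Cxy [Cyx Cyy]]]; auto.
  destruct Ha as [-> | [-> | [-> | ->]]]; split; auto; intros x y t.
  - apply coef_xx_partials_le; auto.
  - apply coef_xy_partials_le; auto.
  - apply coef_yx_partials_le; auto.
  - apply coef_yy_partials_le; auto.
Qed.

Lemma profiles_derivs_le (alpha : nat) t : (alpha <= 2)%nat ->
  Rabs (Derive_n (fprof k) alpha t) <= 2 * Rpower k (7 * INR alpha / 3) * exp (- k * t) /\
  Rabs (Derive_n (gprof k k') alpha t)
    <= 2 * k' ^ alpha * exp (- k / 2 + 5 * k' / 6) * exp (- k' * t / 3).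
Proof.
  intros Ha.
  destruct (fprof_derivs_le t) as [F0 [F1 F2]], (gprof_derivs_le t) as [G0 [G1 G2]].
  pose proof (exp_pos (- k * t)).
  pose proof (Rmult_lt_0_compat _ _ (exp_pos (- k / 2 + 5 * k' / 6)) (exp_pos (- k' * t / 3))).
  destruct alpha as [|[|[|alpha]]]; [| | |lia].
  - replace (7 * INR 0 / 3) with 0 by (simpl; field); rewrite Rpower_O by lra.
    simpl; lra.
  - rewrite (Derive_n_1_eq _ _ _ (is_derive_fprof k)), (Derive_n_1_eq _ _ _ (is_derive_gprof k k')).
    assert (k <= Rpower k (7 * INR 1 / 3)).
    { rewrite <- (Rpower_1 k) at 1 by lra; apply Rle_Rpower; [lra|simpl; lra]. }
    split; [|simpl; lra].
    eapply Rle_trans; [apply F1|apply Rmult_le_compat_r; lra].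
  - rewrite (Derive_n_2_eq _ _ _ _ (is_derive_fprof k) (is_derive_fprof1 k)),
      (Derive_n_2_eq _ _ _ _ (is_derive_gprof k k') (is_derive_gprof1 k k')).
    assert (k ^ 2 <= Rpower k (7 * INR 2 / 3)).
    { rewrite <- (Rpower_pow 2 k) by lra; apply Rle_Rpower; [lra|simpl; lra]. }
    split; [|lra].
    eapply Rle_trans; [apply F2|apply Rmult_le_compat_r; lra].
Qed.

End Bounds.

Lemma sol_transforms (n n' : Z) : (0 < n)%Z -> (0 < n')%Z ->
  let k := IZR n in let k' := IZR n' in
  transforms (fun x y t => cos (k * x) * exp (- k * t))
             (fun x y t => exp (- k / 2 + 5 * k' / 6) * cos (k' * y) * exp (- k' * t))
             0 2 (sol k k') (coef k k').
Proof.
  intros Hn Hn' k k'.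
  assert (k <> 0) by (apply not_0_IZR; lia); assert (k' <> 0) by (apply not_0_IZR; lia).
  destruct (periodic_sol_coef n n') as [Pu [Pxx [Pxy [Pyx Pyy]]]]; try lia.
  destruct (C1_3_coef_entries k k') as [Cxx [Cxy [Cyx Cyy]]]; auto.
  pose proof (C2_3_sol k k'); pose proof (pde_sol k k' H H0).
  unfold transforms; simpl; repeat (split; [solve [auto]|]).
  split; intros x y t Ht; [apply sol_early | apply sol_late]; auto; lra.
Qed.

Theorem mainTheorem9 :
  exists C K M : R, 2 <= C /\
  forall k k' : Z,
    K <= IZR k -> (k < k')%Z -> (k' <= 2 * k)%Z ->
    let c := exp (- IZR k / 2 + 5 * IZR k' / 6) in
    exists (u : fun3) (A : mat_field) (f g : R -> R),
      transforms (fun x y t => cos (IZR k * x) * exp (- IZR k * t))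
                 (fun x y t => c * cos (IZR k' * y) * exp (- IZR k' * t))
                 0 C u A /\
      reg_class 80 60 A /\
      C2_1 f /\ C2_1 g /\
      (forall x y t, 0 <= t <= C ->
         u x y t = f t * cos (IZR k * x) + g t * cos (IZR k' * y)) /\
      (forall (alpha : nat) t, (alpha <= 2)%nat -> 0 <= t <= C ->
         Rabs (Derive_n f alpha t)
           <= M * Rpower (IZR k) (7 * INR alpha / 3) * exp (- IZR k * t) /\
         Rabs (Derive_n g alpha t)
           <= M * IZR k' ^ alpha * c * exp (- IZR k' * t / 3)) /\
      (forall x y t, 0 <= t <= 1 / 100 ->
         u x y t = cos (IZR k * x) * exp (- IZR k * t) /\ is_Id_at A x y t) /\
      (forall x y t, C - 1 / 100 <= t <= C ->
         u x y t = c * cos (IZR k' * y) * exp (- IZR k' * t) /\ is_Id_at A x y t).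
Proof.
  exists 2, 1000000, 2; split; [lra|].
  intros k k' Hk Hkk' Hk'2 c.
  assert (Hn : (0 < k)%Z) by (apply lt_IZR; lra).
  assert (H1 : IZR k < IZR k') by (apply IZR_lt; auto).
  assert (H2 : IZR k' <= 2 * IZR k) by (rewrite <- mult_IZR; apply IZR_le; auto).
  assert (IZR k <> 0) by lra; assert (IZR k' <> 0) by lra.
  exists (sol (IZR k) (IZR k')), (coef (IZR k) (IZR k')), (fprof (IZR k)), (gprof (IZR k) (IZR k')).
  split; [apply sol_transforms; lia|].
  split; [apply reg_class_coef; auto|].
  split; [apply C2_1_of_derivs with (fprof1 (IZR k)) (fprof2 (IZR k));
    [apply is_derive_fprof|apply is_derive_fprof1|apply continuity_fprof2]|].
  split; [apply C2_1_of_derivs with (gprof1 (IZR k) (IZR k')) (gprof2 (IZR k) (IZR k'));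
    [apply is_derive_gprof|apply is_derive_gprof1|apply continuity_gprof2]|].
  split; [intros; unfold sol, add3, tensor, cos_mode; ring|].
  split; [intros alpha t Ha _; apply profiles_derivs_le; auto|].
  split; intros x y t Ht; [apply sol_early | apply sol_late]; auto; lra.
Qed.
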